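(* Let $\mathcal{S}=\mathcal{V}\cup\{m\}$ with $m$ a mask state, and let $\alpha_t$ be a differentiable noise schedule on $[0,T]$ with $\alpha_0=1$, $\alpha_T=0$, $\alpha_t\in(0,1)$ and $\alpha_t'<0$ for $t\in(0,T)$. Consider the masked (absorbing) forward CTMC with rates $R_t(i,j)=-\frac{\alpha_t'}{\alpha_t}(e_j^\top e_m)\mathbf{1}_{\{i\ne m\}}$ ($i\ne j$), so that $q_{t|0}(\cdot\mid x_0)=\alpha_t x_0+(1-\alpha_t)e_m$ for $x_0\in\mathcal{V}$ (identified with its one-hot vector), with $p_{\text{data}}$ supported on $\mathcal{V}$. Let $x_\theta=x_\theta(x_t,t)$ be a probability vector on $\mathcal{V}$ and set $\gamma_t:=-\frac{\alpha_t'}{1-\alpha_t}$ and model rates $R^\theta_t(i,j)=\gamma_t\,e_j^\top(x_\theta-e_m)\mathbf{1}_{\{i=m\}}$, i.e. $\lambda^\theta_t(m)=\gamma_t$, $r^\theta_t(j\mid m)=e_j^\top x_\theta$ for $j\in\mathcal{V}$, and $R^\theta_t(i,\cdot)=0$ for $i\ne m$. Then \[ \mathcal{L}_{\mathrm{cond}}(\theta)=\mathbb{E}_{t\sim\mathcal{U}(0,T),\,x_0\sim p_{\text{data}},\,x_t\sim q_{t|0}(\cdot\mid x_0)}\Bigl[\frac{\alpha_t'}{1-\alpha_t}\,x_0^\top\log x_\theta\cdot\mathbf{1}_{\{x_t=m\}}\Bigr], \] where \[ \mathcal{L}_{\mathrm{cond}}(\theta):=\mathbb{E}_{t,\,x_0,\,i\sim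 q_{t|0}(\cdot\mid x_0)}\Bigl[\sum_{j\ne i}R^\theta_t(i,j)-\sum_{j\ne i}R_t(j,i)\frac{q_{t|0}(j\mid x_0)}{q_{t|0}(i\mid x_0)}\log\frac{R^\theta_t(i,j)}{R_t(j,i)}+\sum_{j\ne i}R_t(j,i)K\Bigl(\frac{q_{t|0}(j\mid x_0)}{q_{t|0}(i\mid x_0)}\Bigr)\Bigr] \] with $K(a)=a(\log a-1)$.
   Context: $e_j$ denotes the one-hot vector of state $j$; $\log x_\theta$ is taken componentwise. Terms with zero rate multiplying are interpreted via the convention $0\log0=0$ (so states $i\ne m$ contribute zero). *)

From HB Require Import structures.
From mathcomp Require Import all_boot all_order all_algebra.
From mathcomp Require Import all_classical all_reals all_analysis.
Set Implicit Arguments. Unset Strict Implicit. Unset Printing Implicit Defensive.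
Import Order.TTheory GRing.Theory Num.Theory.
Local Open Scope ring_scope.

(* State space S = V ∪ {m}, encoded as [option V]; the mstate state m is [None]. *)
Definition mstate {V : finType} : option V := None.

Definition onehot {V : finType} {R : realType} (i j : option V) : R :=
  (i == j)%:R.

(* extended logarithm: log of a nonnegative real, log 0 = -oo *)
Definition elog {R : realType} (x : R) : \bar R := lne x%:E.

Definition qt0 {V : finType} {R : realType} (alpha : R -> R) (t : R)
  (x0 : V) (i : option V) : R :=
  alpha t * onehot (Some x0) i + (1 - alpha t) * onehot mstate i.

Definition Rfwd {V : finType} {R : realType} (alpha : R -> R) (t : R)
  (i j : option V) : R :=
  - (derive1 alpha t / alpha t) * onehot j mstate * (i != mstate)%:R.

Definition gam {R : realType} (alpha : R -> R) (t : R) : R :=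
  - (derive1 alpha t / (1 - alpha t)).

Definition xthS {V : finType} {R : realType} (xth : option V -> R -> V -> R)
  (xt : option V) (t : R) (j : option V) : R :=
  match j with Some v => xth xt t v | None => 0 end.

(* model rates R^theta_t(i,j) = gamma_t e_j^T (x_theta - e_m) 1_{i = m},
   with x_theta = x_theta(x_t, t) evaluated at the current state x_t = i *)
Definition Rmod {V : finType} {R : realType} (alpha : R -> R)
  (xth : option V -> R -> V -> R) (t : R) (i j : option V) : R :=
  gam alpha t * (xthS xth i t j - onehot mstate j) * (i == mstate)%:R.

(* K(a) = a (log a - 1), with 0 log 0 = 0 *)
Definition Kfun {R : realType} (a : R) : \bar R := (a%:E * (elog a - 1%E))%E.

Definition Lcond_integrand {V : finType} {R : realType} (alpha : R -> R)
  (xth : option V -> R -> V -> R) (t : R) (x0 : V) (i : option V) : \bar R :=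
  (\sum_(j | j != i) (Rmod alpha xth t i j)%:E
   - \sum_(j | j != i)
       (Rfwd alpha t j i * (qt0 alpha t x0 j / qt0 alpha t x0 i))%:E
       * elog (Rmod alpha xth t i j / Rfwd alpha t j i)
   + \sum_(j | j != i)
       (Rfwd alpha t j i)%:E * Kfun (qt0 alpha t x0 j / qt0 alpha t x0 i))%E.

Definition expect {V : finType} {R : realType} (T : R) (p : V -> R)
  (alpha : R -> R) (F : R -> V -> option V -> \bar R) : \bar R :=
  ((T^-1)%:E * \int[lebesgue_measure]_(t in `]0%R, T[%classic)
      \sum_(x0 : V) (p x0)%:E *
        \sum_(i : option V) (qt0 alpha t x0 i)%:E * F t x0 i)%E.

Definition Lcond {V : finType} {R : realType} (T : R) (p : V -> R)
  (alpha : R -> R) (xth : option V -> R -> V -> R) : \bar R :=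
  expect T p alpha (Lcond_integrand alpha xth).

From HB Require Import structures.
From mathcomp Require Import all_boot all_order all_algebra.
From mathcomp Require Import all_classical all_reals all_analysis.
From mathcomp Require Import ring.
Import Order.TTheory GRing.Theory Num.Theory numFieldNormedType.Exports.
Local Open Scope ring_scope.

(* Only the mask state carries model rates and receives forward rates, so the
   integrand vanishes at unmasked states. At the mask state, with
   r = q(x0)/q(m) = alpha/(1 - alpha), the only nonzero terms come from j = x0:
   the total model rate gamma, the log term gamma (log r + log x_theta(x0)),
   and the K term -alpha'/alpha * K(r) = gamma (log r - 1). The log r's and the
   constants cancel, leaving -gamma log x_theta(x0). *)

Lemma big_neq_None (R : Type) (idx : R) (op : Monoid.com_law idx)
    (V : finType) (F : option V -> R) :
  \big[op/idx]_(j | j != None) F j = \big[op/idx]_(v : V) F (Some v).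
Proof.
rewrite (reindex_omap Some id) /=; last by case.
by apply: eq_bigl => v; rewrite eqxx.
Qed.

Lemma sum_onehot_Some (V : finType) (R : realType) (x0 : V) (f : V -> \bar R) :
  (\sum_(v : V) (onehot (Some x0) (Some v))%:E * f v = f x0)%E.
Proof.
rewrite (bigD1 x0) //= big1 ?adde0 /onehot ?eqxx ?mul1e // => v vx0.
by rewrite (inj_eq Some_inj) eq_sym (negbTE vx0) mul0e.
Qed.

Lemma elogM_cancel (R : realType) (g r x : R) : 0 < g -> 0 < r -> 0 <= x ->
  (g%:E - g%:E * elog (r * x) + (g * (ln r - 1))%:E = (- g)%:E * elog x)%E.
Proof.
move=> g0 r0; rewrite le_eqVlt => /orP[/eqP<- | x0].
  by rewrite mulr0 /elog /= lexx gt0_muleNy ?lt0_muleNy ?lte_fin ?oppr_lt0.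
rewrite /elog !lne_EFin ?mulr_gt0 // lnM ?posrE // -!EFinM -EFinB -EFinD.
by congr (_%:E); ring.
Qed.

Lemma Lcond_integrand_unmasked (V : finType) (R : realType) (alpha : R -> R)
    (xth : option V -> R -> V -> R) (t : R) (x0 v : V) :
  Lcond_integrand alpha xth t x0 (Some v) = 0%E.
Proof.
have Rfwd_to_unmasked j : Rfwd alpha t j (Some v) = 0.
  by rewrite /Rfwd /onehot /= mulr0 mul0r.
rewrite /Lcond_integrand !big1 ?subee ?adde0 // => j _.
- by rewrite Rfwd_to_unmasked mul0e.
- by rewrite Rfwd_to_unmasked mul0r mul0e.
- by rewrite /Rmod /= mulr0.
Qed.

Section MaskState.
Variables (V : finType) (R : realType) (alpha : R -> R).
Variables (xth : option V -> R -> V -> R) (t : R) (x0 : V).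
Hypothesis alpha_01 : 0 < alpha t < 1.
Hypothesis alpha'_lt0 : derive1 alpha t < 0.
Hypothesis xth_sum1 : \sum_(v : V) xth mstate t v = 1.

Local Notation A := (alpha t).
Local Notation D := (derive1 alpha t).

Let A_gt0 : 0 < A. Proof. by case/andP: alpha_01. Qed.
Let A1_gt0 : 0 < 1 - A. Proof. by rewrite subr_gt0; case/andP: alpha_01. Qed.
Let A_neq0 : A != 0. Proof. by rewrite gt_eqF. Qed.
Let A1_neq0 : 1 - A != 0. Proof. by rewrite gt_eqF. Qed.
Let D_neq0 : D != 0. Proof. by rewrite lt_eqF. Qed.

Let Rfwd_to_mask (v : V) : Rfwd alpha t (Some v) mstate = - (D / A).
Proof. by rewrite /Rfwd /onehot /= !mulr1. Qed.

Let Rmod_from_mask (v : V) :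
  Rmod alpha xth t mstate (Some v) = gam alpha t * xth mstate t v.
Proof. by rewrite /Rmod /xthS /onehot /= subr0 mulr1. Qed.

Let qt0_unmasked (v : V) : qt0 alpha t x0 (Some v) = A * (x0 == v)%:R.
Proof. by rewrite /qt0 /onehot /= (inj_eq Some_inj) mulr0 addr0. Qed.

Let qt0_mask : qt0 alpha t x0 mstate = 1 - A.
Proof. by rewrite /qt0 /onehot /= mulr0 add0r mulr1. Qed.

Lemma sum_Rmod_mask :
  (\sum_(j | j != mstate) (Rmod alpha xth t mstate j)%:E = (gam alpha t)%:E)%E.
Proof.
rewrite big_neq_None sumEFin; under eq_bigr do rewrite Rmod_from_mask.
by rewrite -mulr_sumr xth_sum1 mulr1.
Qed.

Lemma Lcond_log_term_mask :
  (\sum_(j | j != mstate)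
     (Rfwd alpha t j mstate * (qt0 alpha t x0 j / qt0 alpha t x0 mstate))%:E
     * elog (Rmod alpha xth t mstate j / Rfwd alpha t j mstate)
   = (gam alpha t)%:E * elog (A / (1 - A) * xth mstate t x0))%E.
Proof.
rewrite big_neq_None (bigD1 x0) //= big1 ?adde0; last first.
  by move=> v vx0; rewrite qt0_unmasked eq_sym (negbTE vx0) !(mulr0, mul0r) mul0e.
rewrite Rfwd_to_mask Rmod_from_mask qt0_unmasked qt0_mask eqxx mulr1 /gam.
by congr (_%:E * elog _)%E; field; rewrite ?A_neq0 ?A1_neq0 ?D_neq0.
Qed.

Lemma Lcond_K_term_mask :
  (\sum_(j | j != mstate) (Rfwd alpha t j mstate)%:E
     * Kfun (qt0 alpha t x0 j / qt0 alpha t x0 mstate)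
   = (gam alpha t * (ln (A / (1 - A)) - 1))%:E)%E.
Proof.
rewrite big_neq_None (bigD1 x0) //= big1 ?adde0; last first.
  by move=> v vx0; rewrite qt0_unmasked eq_sym (negbTE vx0) mulr0 mul0r /Kfun mul0e mule0.
rewrite Rfwd_to_mask qt0_unmasked qt0_mask eqxx mulr1 /Kfun /elog.
rewrite lne_EFin ?divr_gt0 // -!EFinM /gam; congr (_%:E).
by field; rewrite ?A_neq0 ?A1_neq0 ?D_neq0.
Qed.

Lemma Lcond_integrand_mask : 0 <= xth mstate t x0 ->
  Lcond_integrand alpha xth t x0 mstate
  = ((D / (1 - A))%:E * elog (xth mstate t x0))%E.
Proof.
move=> xth_ge0; rewrite /Lcond_integrand.
rewrite sum_Rmod_mask Lcond_log_term_mask Lcond_K_term_mask.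
have gam_gt0 : 0 < gam alpha t by rewrite oppr_gt0 pmulr_llt0 ?invr_gt0.
by rewrite elogM_cancel ?divr_gt0 // /gam opprK.
Qed.

End MaskState.

Theorem corollary4p10 (V : finType) (R : realType) (T : R) (alpha : R -> R)
  (p : V -> R) (xth : option V -> R -> V -> R) :
  0 < T ->
  {within `[0%R, T], continuous alpha}%classic ->
  (forall t, 0 < t < T -> derivable alpha t 1) ->
  alpha 0 = 1 -> alpha T = 0 ->
  (forall t, 0 < t < T -> 0 < alpha t < 1) ->
  (forall t, 0 < t < T -> derive1 alpha t < 0) ->
  (forall x0, 0 <= p x0) -> \sum_(x0 : V) p x0 = 1 ->
  (forall xt t v, 0 <= xth xt t v) ->
  (forall xt t, \sum_(v : V) xth xt t v = 1) ->
  Lcond T p alpha xth =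
  expect T p alpha (fun t x0 xt =>
    ((derive1 alpha t / (1 - alpha t))%:E
     * (\sum_(v : V) (onehot (Some x0) (Some v))%:E * elog (xth xt t v))
     * ((xt == mstate)%:R)%:E)%E).
Proof.
move=> _ _ _ _ _ alpha_01 alpha'_lt0 _ _ xth_ge0 xth_sum1.
rewrite /Lcond /expect; congr (_ * _)%E.
apply: eq_integral => t; rewrite inE /= in_itv /= => t_in.
apply: eq_bigr => x0 _; congr (_ * _)%E.
apply: eq_bigr => -[v|] _; congr (_ * _)%E.
  by rewrite Lcond_integrand_unmasked /= mule0.
by rewrite Lcond_integrand_mask ?alpha_01 ?alpha'_lt0 // sum_onehot_Some mule1.
Qed.
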